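(* Let $F$ be a forest and let $U$ be a unicyclic graph vertex-disjoint from $F$. (i) Every nontrivial 2-switch over $F$ is a p-switch over $F$. (ii) Let $\tau=\tau_A$, $A=\binom{a\ b}{c\ d}$, be a 2-switch over $G=F\,\dot\cup\, U$ (the disjoint union). If $ab\in E(F)$ and $cd\in E(\operatorname{Forest}(U))$, then $\tau$ is a p-switch over $G$.
   Context: Graphs are finite, simple, undirected, labeled. A unicyclic graph is a connected graph with exactly one cycle; a pseudoforest is a graph each of whose components is a tree or a unicyclic graph. For vertices $a,b,c,d$, $A=\binom{a\ b}{c\ d}$ is interchangeable in $G$ if $ab,cd\in E(G)$, $\{a,b\}\cap\{c,d\}=\varnothing$, $ac,bd\notin E(G)$; the 2-switch $\tau_A$ sends $G$ to $G-ab-cd+ac+bd$ if $A$ is interchangeable and to $G$ otherwise (trivial). A nontrivial 2-switch $\tau$ over a pseudoforest $G$ is a p-switch if $\tau(G)$ is a pseudoforest. $\operatorname{Cycles}(H)$ is the subgraph induced by vertices lying on some cycle of $H$; $\operatorname{Forest}(H)=H-E(\operatorname{Cycles}(H))$. *)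

From mathcomp Require Import all_boot.
Set Implicit Arguments. Unset Strict Implicit. Unset Printing Implicit Defensive.

Section Graphs.
Variable T : finType.

Record graph := Graph { verts : {set T}; edges : {set {set T}} }.

Definition wf (G : graph) : Prop :=
  forall e, e \in edges G -> #|e| = 2 /\ e \subset verts G.

Definition adjE (E : {set {set T}}) : rel T := fun x y => [set x; y] \in E.
Definition adj (G : graph) : rel T := adjE (edges G).

Definition connected (G : graph) : bool :=
  [forall x in verts G, forall y in verts G, connect (adj G) x y].

Definition coverE (C : {set {set T}}) : {set T} := \bigcup_(e in C) e.

(* a cycle of G, given by its (nonempty) edge set: the subgraph spanned by C
   is connected and 2-regular *)
Definition is_cycle (G : graph) (C : {set {set T}}) : bool :=
  [&& C \subset edges G, C != set0,
      [forall v in coverE C, #|[set e in C | v \in e]| == 2] &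
      [forall u in coverE C, forall v in coverE C, connect (adjE C) u v]].

Definition acyclic (G : graph) : bool := [forall C, ~~ is_cycle G C].
Definition forest (G : graph) : bool := acyclic G.
Definition tree (G : graph) : bool := connected G && acyclic G.
Definition unicyclic (G : graph) : bool :=
  connected G && (#|[set C | is_cycle G C]| == 1).

Definition induced (G : graph) (S : {set T}) : graph :=
  Graph (verts G :&: S) [set e in edges G | e \subset S].

Definition component (G : graph) (x : T) : graph :=
  induced G [set y | connect (adj G) x y].

Definition pseudoforest (G : graph) : bool :=
  [forall x in verts G, tree (component G x) || unicyclic (component G x)].

Definition cycle_verts (H : graph) : {set T} :=
  [set v in verts H | [exists C, is_cycle H C && (v \in coverE C)]].
Definition Cycles (H : graph) : graph := induced H (cycle_verts H).
Definition Forest (H : graph) : graph :=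
  Graph (verts H) (edges H :\: edges (Cycles H)).

(* disjoint union (vertex-disjointness is a separate hypothesis) *)
Definition gunion (G H : graph) : graph :=
  Graph (verts G :|: verts H) (edges G :|: edges H).

Definition interchangeable (G : graph) (a b c d : T) : bool :=
  [&& [set a; b] \in edges G, [set c; d] \in edges G,
      [disjoint [set a; b] & [set c; d]],
      [set a; c] \notin edges G & [set b; d] \notin edges G].

Definition switch (G : graph) (a b c d : T) : graph :=
  if interchangeable G a b c d then
    Graph (verts G)
      ((edges G :\ [set a; b] :\ [set c; d]) :|: [set [set a; c]; [set b; d]])
  else G.

Definition p_switch (G : graph) (a b c d : T) : bool :=
  [&& pseudoforest G, interchangeable G a b c d &
      pseudoforest (switch G a b c d)].

End Graphs.

From mathcomp Require Import all_boot zify.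
Set Implicit Arguments. Unset Strict Implicit. Unset Printing Implicit Defensive.

(* A graph with at most one cycle is a pseudoforest, since the cycles of a
   component are cycles of the graph; and if an edge set has two distinct
   cycles, then for every edge [e] it has a cycle avoiding [e].
   (i) If the switched forest had two cycles, one of them would avoid [ac] and
   thus pass through [bd], so [b] and [d] are joined in [F - ab - cd];
   symmetrically so are [a] and [c], and [a - c - d - b] closes a cycle of [F]
   with [ab].
   (ii) Every cycle of [F + U] lies in [U].  A cycle of the switched graph
   through [ac] would join [a] to [b], [c] or [d] in [F + U - ab - cd]; but a
   walk from [a] never leaves [F], and [ab] is a bridge because it lies on no
   cycle.  So the switched graph has no cycle besides that of [U]. *)

Lemma disjoint_neq (S : finType) (A B : {set S}) x y :
  [disjoint A & B] -> x \in A -> y \in B -> x != y.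
Proof. by move=> dAB xA; apply: contraTneq => <-; rewrite (disjointFr dAB xA). Qed.

Lemma card_set_sum (S : finType) (A : {set S}) (P : pred S) :
  #|[set x in A | P x]| = \sum_(x in A) P x.
Proof.
rewrite -sum1_card big_mkcond [RHS]big_mkcond /=; apply: eq_bigr => x _.
by rewrite inE; case: (x \in A); case: (P x).
Qed.

Section EdgeSets.
Variable T : finType.
Implicit Types (E C D H : {set {set T}}) (K : {set T}) (e f : {set T}) (u v w x y : T).

Definition pair_edges E := forall e, e \in E -> #|e| = 2.

Definition degree E v := #|[set e in E | v \in e]|.

Definition edge_cycle C : bool :=
  [&& C != set0, [forall v in coverE C, degree C v == 2] &
      [forall u in coverE C, forall v in coverE C, connect (adjE C) u v]].

Lemma is_cycleE (G : graph T) C : is_cycle G C = (C \subset edges G) && edge_cycle C.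
Proof. by []. Qed.

Definition uniq_cycle E := forall C1 C2,
  C1 \subset E -> C2 \subset E -> edge_cycle C1 -> edge_cycle C2 -> C1 = C2.

Lemma uniq_cycle_sub E E' :
  (forall C, C \subset E -> edge_cycle C -> C \subset E') ->
  uniq_cycle E' -> uniq_cycle E.
Proof.
move=> sEE' uE' C1 C2 s1 s2 c1 c2.
exact: (uE' C1 C2 (sEE' _ s1 c1) (sEE' _ s2 c2) c1 c2).
Qed.

Lemma pair_edgesS E E' : E \subset E' -> pair_edges E' -> pair_edges E.
Proof. by move=> /subsetP sEE' pE' e /sEE'; apply: pE'. Qed.

Lemma pair_neq u v : #|[set u; v]| = 2 -> u != v.
Proof. by rewrite cards2; case: (u != v). Qed.

Lemma adjE_sym E : symmetric (adjE E).
Proof. by move=> x y; rewrite /adjE setUC. Qed.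

Lemma connect_adjE_sym E : connect_sym (adjE E).
Proof. exact/sym_connect_sym/adjE_sym. Qed.

Lemma connect_adjES E E' x y :
  E \subset E' -> connect (adjE E) x y -> connect (adjE E') x y.
Proof. by move=> /subsetP sEE'; apply: connect_sub => p q pq; apply/connect1/sEE'. Qed.

Lemma connect_adjE_closed E K x y :
  (forall w z, [set w; z] \in E -> w \in K -> z \in K) ->
  connect (adjE E) x y -> x \in K -> y \in K.
Proof.
by move=> clK /(closed_connect (intro_closed (connect_adjE_sym E) clK)) ->.
Qed.

Lemma connect_adjE_cover E x y : connect (adjE E) x y -> y = x \/ y \in coverE E.
Proof.
rewrite connect_adjE_sym => /connectP [[|z p] /= pp lw]; first by left.
right; case/andP: pp => yz _; apply/bigcupP; exists [set y; z] => //.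
by rewrite set21.
Qed.

Lemma connect_adjE_setU1 E u v x y :
  connect (adjE ([set u; v] |: E)) x y ->
  [|| connect (adjE E) x y, connect (adjE E) x u | connect (adjE E) x v].
Proof.
move=> cxy; apply/negPn/negP => /norP [nxy /norP [nxu nxv]].
suff : y \in [set w | connect (adjE E) x w] by rewrite inE (negbTE nxy).
apply: connect_adjE_closed cxy _; last by rewrite inE.
move=> w z; rewrite in_setU1 !inE => /orP [/eqP wz_uv | wz] xw.
  have : w \in [set u; v] by rewrite -wz_uv set21.
  by case/set2P => eqw; rewrite eqw ?(negbTE nxu) ?(negbTE nxv) in xw.
exact: connect_trans xw (connect1 wz).
Qed.

Lemma degree_setU1 E f w : f \notin E -> degree (f |: E) w = (w \in f) + degree E w.
Proof. by move=> fE; rewrite /degree !card_set_sum big_setU1. Qed.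

Lemma sum_degree E K : \sum_(w in K) degree E w = \sum_(f in E) #|f :&: K|.
Proof.
rewrite (eq_bigr (fun w => \sum_(f in E) (w \in f))); last first.
  by move=> w _; rewrite /degree card_set_sum.
rewrite exchange_big /=; apply: eq_bigr => f _.
by rewrite setIC -card_set_sum; congr #|_|; apply/setP => x; rewrite !inE.
Qed.

Lemma card_setI_pair x y K : x != y -> (x \in K) = (y \in K) ->
  #|[set x; y] :&: K| = 2 * ([set x; y] \subset K).
Proof.
move=> xy xyK; rewrite subUset !sub1set -xyK andbb.
case: (boolP (x \in K)) => xK.
  by rewrite (setIidPl _) ?cards2 ?xy //; apply/subsetP => z /set2P [] ->; rewrite -?xyK.
suff -> : [set x; y] :&: K = set0 by rewrite cards0.
apply/setP => z; rewrite !inE; apply/negbTE/andP => [[/orP [] /eqP -> ]].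
  exact/negP.
by rewrite -xyK; exact/negP.
Qed.

Lemma edge_cycle_connectD1 C u v : pair_edges C -> edge_cycle C ->
  [set u; v] \in C -> connect (adjE (C :\ [set u; v])) u v.
Proof.
(* Parity: the component [K] of [u] in [C - e] meets [e] in one end and every
   other edge of [C] in 0 or 2 ends, yet the degrees over [K] add up to [2 #|K|]. *)
move=> pC /and3P [_ /forall_inP deg2 _] uvC; set e := [set u; v] in uvC *.
have uv : u != v := pair_neq (pC _ uvC).
apply/idPn => nuv; set K := [set w | connect (adjE (C :\ e)) u w].
have uK : u \in K by rewrite inE.
have vK : v \notin K by rewrite inE.
have sumK : \sum_(w in K) degree C w = #|K| * 2.
  rewrite -sum_nat_const; apply: eq_bigr => w; rewrite inE.
  case/connect_adjE_cover => [-> | /bigcupP [f]].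
    by apply/eqP/deg2/bigcupP; exists e; rewrite ?set21.
  by rewrite in_setD1 => /andP [_ fC] wf; apply/eqP/deg2/bigcupP; exists f.
have eK : #|e :&: K| = 1.
  suff -> : e :&: K = [set u] by rewrite cards1.
  apply/setP => z; rewrite in_setI in_set2 in_set1.
  case: (eqVneq z u) => [-> | _] /=; first by rewrite uK.
  by case: (eqVneq z v) => [-> |] //=; rewrite (negbTE vK).
have fK f : f \in C -> f != e -> #|f :&: K| = 2 * (f \subset K).
  move=> fC fe; have /eqP /cards2P [x [y [xy fxy]]] := pC f fC.
  rewrite fxy card_setI_pair // !inE.
  apply: (connect_closed (connect_adjE_sym _)).
  by rewrite /adjE -fxy in_setD1 fe fC.
move: (sum_degree C K); rewrite sumK (bigD1 e) //= eK.
rewrite (eq_bigr (fun f => 2 * (f \subset K))) -?big_distrr /=; first lia.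
by move=> f /andP [fC fe]; rewrite fK.
Qed.

Fixpoint path_edges x (s : seq T) : {set {set T}} :=
  if s is y :: s' then [set x; y] |: path_edges y s' else set0.

Lemma path_edges_sub E x s : path (adjE E) x s -> path_edges x s \subset E.
Proof.
elim: s x => [|y s IHs] x /=; first by rewrite sub0set.
by case/andP => xy ps; rewrite subUset sub1set IHs // andbT.
Qed.

Lemma mem_path_edges x s e w : e \in path_edges x s -> w \in e -> w \in x :: s.
Proof.
elim: s x => [|y s IHs] x /=; first by rewrite inE.
rewrite in_setU1 in_cons => /orP [/eqP -> /set2P [] -> | /IHs ws /ws ->].
- by rewrite eqxx.
- by rewrite mem_head orbT.
- by rewrite orbT.
Qed.

Lemma connect_path_edges x s w : w \in x :: s -> connect (adjE (path_edges x s)) x w.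
Proof.
elim: s x => [|y s IHs] x /=; first by rewrite inE => /eqP ->.
rewrite in_cons => /orP [/eqP -> // | ws].
apply: connect_trans (connect1 (_ : adjE _ x y)) _; first by rewrite /adjE setU11.
exact/(connect_adjES (subsetUr _ _))/IHs.
Qed.

(* the ends of a simple path are the vertices of degree 1 *)
Lemma degree_path_edges x s w : uniq (x :: s) ->
  degree (path_edges x s) w + (w == x) + (w == last x s) = 2 * (w \in x :: s).
Proof.
elim: s x => [|y s IHs] x /=.
  have -> : degree set0 w = 0.
    by apply/eqP; rewrite cards_eq0; apply/eqP/setP => f; rewrite !inE.
  by rewrite inE; case: (w == x).
case/andP; rewrite in_cons negb_or => /andP [xy xs] us.
have xyP : [set x; y] \notin path_edges y s.
  by apply/negP => /mem_path_edges /(_ (set21 x y)); rewrite in_cons (negbTE xy) (negbTE xs).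
rewrite degree_setU1 // in_set2 in_cons; have := IHs y us; rewrite in_cons.
case: (eqVneq w x) => [-> | _].
  by rewrite (negbTE xy) (negbTE xs); case: (x == last y s) => /=; lia.
by case: (w == y); case: (w \in s); case: (w == last y s) => /=; lia.
Qed.

Lemma connect_edge_cycle E u v : connect (adjE E) u v -> [set u; v] \notin E -> u != v ->
  exists2 C : {set {set T}}, C \subset [set u; v] |: E & ([set u; v] \in C) && edge_cycle C.
Proof.
case/connectP => p pp -> {v}; case: (shortenP pp) => s ps us _ {p pp}.
set v := last u s => uvE uv.
have uvP : [set u; v] \notin path_edges u s.
  by apply: contra uvE; apply/subsetP/path_edges_sub.
set C := [set u; v] |: path_edges u s.
have degC w : degree C w = 2 * (w \in u :: s).
  rewrite /C degree_setU1 // -(degree_path_edges w us) -/v in_set2.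
  by case: (eqVneq w u) => [-> | _]; [rewrite (negbTE uv) | case: (w == v)] => /=; lia.
have coverC w : w \in coverE C -> w \in u :: s.
  case/bigcupP => f; rewrite /C in_setU1 => /orP [/eqP -> | /mem_path_edges]; last exact.
  by case/set2P => ->; [apply: mem_head | apply: mem_last].
have connectC w : w \in u :: s -> connect (adjE C) u w.
  by move/connect_path_edges; apply/connect_adjES/subsetUr.
exists C; first by rewrite /C setUS // path_edges_sub.
rewrite /C setU11 -/C /=; apply/and3P; split.
- by apply/set0Pn; exists [set u; v]; rewrite setU11.
- by apply/forall_inP => w /coverC wus; rewrite degC wus.
apply/forall_inP => w1 /coverC /connectC c1; apply/forall_inP => w2 /coverC /connectC.
by apply: connect_trans; rewrite connect_adjE_sym.
Qed.

Lemma connectD1_edge_cycle E u v : pair_edges E -> [set u; v] \in E ->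
  connect (adjE (E :\ [set u; v])) u v ->
  exists2 C : {set {set T}}, C \subset E & ([set u; v] \in C) && edge_cycle C.
Proof.
move=> pE uvE uv_conn.
have [|C sC cC] := connect_edge_cycle uv_conn _ (pair_neq (pE _ uvE)).
  by rewrite setD11.
by exists C; rewrite // -(setD1K uvE).
Qed.

Lemma subsetU1_notin E D e : D \subset e |: E -> e \notin D -> D \subset E.
Proof.
move=> sD eD; apply: subset_trans (_ : D \subset D :\ e) _.
  by rewrite subsetD1 subxx.
by rewrite subDset.
Qed.

Lemma edge_cycle_exchange E C1 C2 e f : pair_edges E ->
  C1 \subset E -> C2 \subset E -> edge_cycle C1 -> edge_cycle C2 ->
  e \in C2 -> f \in C1 -> f \notin C2 ->
  exists2 C : {set {set T}}, C \subset E :\ e & edge_cycle C.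
Proof.
move=> pE s1 s2 c1 c2 eC2 fC1 fC2.
have fEe : f \in E :\ e.
  by rewrite in_setD1 (subsetP s1 _ fC1) andbT; apply: contraNneq fC2 => ->.
have /eqP /cards2P [x [y [_ fxy]]] := pE f (subsetP s1 _ fC1).
rewrite fxy in fC1 fEe.
(* in the walk [C1 - f] from [x] to [y], the edge [e] can be bypassed along
   [C2 - e], which avoids [f] *)
have xy_conn : connect (adjE (E :\ e :\ [set x; y])) x y.
  apply: connect_sub (edge_cycle_connectD1 (pair_edgesS s1 pE) c1 fC1) => p q.
  rewrite /adjE in_setD1 => /andP [pqf pqC1]; case: (eqVneq [set p; q] e) => [pqe | pqe].
    rewrite -pqe in eC2.
    apply: connect_adjES (edge_cycle_connectD1 (pair_edgesS s2 pE) c2 eC2).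
    rewrite -pqe setDDl (setUC [set [set p; q]]) -setDDl; apply: setSD.
    by rewrite subsetD1 s2 -fxy fC2.
  by apply: connect1; rewrite /adjE !in_setD1 pqe pqf (subsetP s1 _ pqC1).
have pEe : pair_edges (E :\ e) := pair_edgesS (subD1set _ _) pE.
have [C sC /andP [_ cC]] := connectD1_edge_cycle pEe fEe xy_conn.
by exists C.
Qed.

Lemma distinct_edge_cycles_avoid E C1 C2 e : pair_edges E ->
  C1 \subset E -> C2 \subset E -> edge_cycle C1 -> edge_cycle C2 -> C1 != C2 ->
  exists2 C : {set {set T}}, C \subset E :\ e & edge_cycle C.
Proof.
move=> pE s1 s2 c1 c2 C12.
have avoid C : C \subset E -> edge_cycle C -> e \notin C ->
    exists2 C' : {set {set T}}, C' \subset E :\ e & edge_cycle C'.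
  by move=> sC cC eC; exists C; rewrite // subsetD1 sC.
have [eC1 | ] := boolP (e \in C1); last exact: avoid.
have [eC2 | ] := boolP (e \in C2); last exact: avoid.
have [sC12 | /subsetPn [f fC1 fC2]] := boolP (C1 \subset C2).
  have /subsetPn [f fC2 fC1] : ~~ (C2 \subset C1) by rewrite eqEsubset sC12 in C12.
  exact: edge_cycle_exchange pE s2 s1 c2 c1 eC1 fC2 fC1.
exact: edge_cycle_exchange pE s1 s2 c1 c2 eC2 fC1 fC2.
Qed.

Lemma edge_cycle_setU1_connect H D p q :
  (forall C, C \subset H -> ~~ edge_cycle C) ->
  pair_edges D -> edge_cycle D -> D \subset [set p; q] |: H -> connect (adjE H) p q.
Proof.
move=> acH pD cD sD.
have pqD : [set p; q] \in D by apply: contraT => /(subsetU1_notin sD) /acH; rewrite cD.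
by apply: connect_adjES (edge_cycle_connectD1 pD cD pqD); rewrite subDset.
Qed.

End EdgeSets.

Section Graphs.
Variable T : finType.
Implicit Types (G F U : graph T) (C D H : {set {set T}}) (a b c d x y : T).

Lemma wf_pair_edges G : wf G -> pair_edges (edges G).
Proof. by move=> wfG e /wfG []. Qed.

Lemma pair_edges_switch (E : {set {set T}}) a b c d :
  pair_edges E -> a != c -> b != d ->
  pair_edges ((E :\ [set a; b] :\ [set c; d]) :|: [set [set a; c]; [set b; d]]).
Proof.
move=> pE ac bd e; rewrite in_setU.
by case/orP => [/setD1P [_ /setD1P [_ /pE]] // | /set2P [] ->]; rewrite cards2 ?ac ?bd.
Qed.

Lemma forest_edge_cycle F C : forest F -> C \subset edges F -> ~~ edge_cycle C.
Proof. by move=> /forallP /(_ C); rewrite is_cycleE negb_and => /orP [/negP|]. Qed.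

Lemma forest_uniq_cycle F : forest F -> uniq_cycle (edges F).
Proof. by move=> fF C1 C2 /(forest_edge_cycle fF) /negP. Qed.

Lemma unicyclic_uniq_cycle U : unicyclic U -> uniq_cycle (edges U).
Proof.
case/andP => _ /cards1P [C0 cyclesU] C1 C2 s1 s2 c1 c2.
have inC0 C : C \subset edges U -> edge_cycle C -> C = C0.
  by move=> sC cC; apply/set1P; rewrite -cyclesU inE is_cycleE sC.
by rewrite (inC0 _ s1 c1) (inC0 _ s2 c2).
Qed.

Lemma path_component G x y p :
  connect (adj G) x y -> path (adj G) y p -> path (adj (component G x)) y p.
Proof.
elim: p y => [|z p IHp] y //= xy /andP [yz pz].
have xz := connect_trans xy (connect1 yz).
rewrite IHp // andbT /adj /adjE /= inE; apply/andP; split; first exact: yz.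
by apply/subsetP => t /set2P [] ->; rewrite inE.
Qed.

Lemma pseudoforest_uniq_cycle G : uniq_cycle (edges G) -> pseudoforest G.
Proof.
move=> uG; apply/forall_inP => x _; set K := component G x.
have connK y : connect (adj G) x y -> connect (adj K) x y.
  by case/connectP => p pp ->; apply/connectP; exists p; rewrite ?path_component.
have conK : connected K.
  apply/forall_inP => y; rewrite /K /component /induced /= !inE => /andP [_ xy].
  apply/forall_inP => z; rewrite !inE => /andP [_ xz].
  by apply: connect_trans (connK z xz); rewrite connect_adjE_sym; apply: connK.
have sK : edges K \subset edges G by apply/subsetP => e; rewrite inE => /andP [].
case: (pickP (is_cycle K)) => [C0 cC0 | noC]; apply/orP; [right | left].
  rewrite /unicyclic conK; apply/cards1P; exists C0; apply/setP => C; rewrite !inE.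
  apply/idP/eqP => [cC | -> //]; move: cC cC0; rewrite !is_cycleE.
  by case/andP => sC cC /andP [sC0 cC0]; apply: uG cC cC0; apply: subset_trans sK.
by rewrite /tree conK; apply/forallP => C; rewrite noC.
Qed.

Lemma forest_switch_uniq_cycle F a b c d : wf F -> forest F ->
  interchangeable F a b c d -> uniq_cycle (edges (switch F a b c d)).
Proof.
move=> wfF fF Hi; rewrite /switch Hi /=.
case/and5P: Hi => abF cdF dj _ _.
have ac := disjoint_neq dj (set21 a b) (set21 c d).
have bd := disjoint_neq dj (set22 a b) (set22 c d).
set H := edges F :\ [set a; b] :\ [set c; d].
have sHF : H \subset edges F by apply: subset_trans (subD1set _ _) (subD1set _ _).
have acyclicH C : C \subset H -> ~~ edge_cycle C.
  by move=> sC; apply: forest_edge_cycle fF (subset_trans sC sHF).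
have pE := pair_edges_switch (wf_pair_edges wfF) ac bd.
move=> C1 C2 s1 s2 c1 c2; apply/eqP/negPn/negP => C12.
(* two distinct cycles leave a cycle avoiding either new edge, which must then use the other one *)
have [D1 sD1 cD1] := distinct_edge_cycles_avoid [set a; c] pE s1 s2 c1 c2 C12.
have [D2 sD2 cD2] := distinct_edge_cycles_avoid [set b; d] pE s1 s2 c1 c2 C12.
have pD1 := pair_edgesS (subset_trans sD1 (subD1set _ _)) pE.
have pD2 := pair_edgesS (subset_trans sD2 (subD1set _ _)) pE.
have bdH : connect (adjE H) b d.
  apply: edge_cycle_setU1_connect acyclicH pD1 cD1 (subset_trans sD1 _).
  by rewrite subDset setUC -setUA.
have acH : connect (adjE H) a c.
  apply: edge_cycle_setU1_connect acyclicH pD2 cD2 (subset_trans sD2 _).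
  by rewrite subDset setUC -setUA setUCA.
have ab_conn : connect (adjE (edges F :\ [set a; b])) a b.
  have sH : H \subset edges F :\ [set a; b] by apply: subD1set.
  apply: connect_trans (connect_adjES sH acH) _.
  apply: connect_trans (connect1 (_ : adjE _ c d)) _.
    rewrite /adjE in_setD1 cdF andbT; apply: contraTneq dj => ->.
    by rewrite -setI_eq0 setIid -cards_eq0 cards2.
  by rewrite connect_adjE_sym (connect_adjES sH bdH).
have [C sC /andP [_ cC]] := connectD1_edge_cycle (wf_pair_edges wfF) abF ab_conn.
by have := forest_edge_cycle fF sC; rewrite cC.
Qed.

Section DisjointUnion.
Variables F U : graph T.
Hypotheses (wfF : wf F) (wfU : wf U) (disjFU : [disjoint verts F & verts U]).

Lemma pair_edges_gunion : pair_edges (edges (gunion F U)).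
Proof. by move=> e; rewrite in_setU => /orP [/wfF [] | /wfU []]. Qed.

Lemma connect_gunion_notin H x y : H \subset edges (gunion F U) ->
  x \in verts F -> connect (adjE H) x y -> y \notin verts U.
Proof.
move=> /subsetP sH xF /connect_adjE_closed xy; apply/negP => yU.
suff yF : y \in verts F by rewrite (disjointFr disjFU yF) in yU.
apply: xy xF => w z /sH; rewrite in_setU.
case/orP => [/wfF [_ /subsetP sF] _ | /wfU [_ /subsetP sU] wF]; first by apply: sF; rewrite set22.
by have := sU w (set21 w z); rewrite (disjointFr disjFU wF).
Qed.

Lemma gunion_edge_cycle_split C : C \subset edges (gunion F U) -> edge_cycle C ->
  (C \subset edges F) || (C \subset edges U).
Proof.
move=> sC /and3P [_ _ /forall_inP connC].
have [sCU | /subsetPn [f fC fU]] := boolP (C \subset edges U); first by apply/orP; right.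
have fF : f \in edges F by move: (subsetP sC _ fC); rewrite in_setU (negbTE fU) orbF.
have [/eqP /cards2P [x [x2 [_ fx]]] /subsetP fsub] := wfF fF.
have xf : x \in f by rewrite fx set21.
have xC : x \in coverE C by apply/bigcupP; exists f.
apply/orP; left; apply/subsetP => g gC.
move: (subsetP sC _ gC); rewrite in_setU => /orP [// | gU].
have [/eqP /cards2P [y [y2 [_ gy]]] /subsetP gsub] := wfU gU.
have yg : y \in g by rewrite gy set21.
have yC : y \in coverE C by apply/bigcupP; exists g.
by have := connect_gunion_notin sC (fsub x xf) (forall_inP (connC x xC) y yC); rewrite gsub.
Qed.

Lemma gunion_cross_edge x y : x \in verts F -> y \in verts U ->
  [set x; y] \notin edges (gunion F U).
Proof.
move=> xF yU; rewrite in_setU negb_or; apply/andP; split; apply/negP.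
  by case/wfF => _ /subsetP /(_ y (set22 x y)) yF; rewrite (disjointFr disjFU yF) in yU.
by case/wfU => _ /subsetP /(_ x (set21 x y)); rewrite (disjointFr disjFU xF).
Qed.

Lemma interchangeable_gunion a b c d :
  [set a; b] \in edges F -> [set c; d] \in edges U ->
  interchangeable (gunion F U) a b c d.
Proof.
move=> abF cdU; have [_ abV] := wfF abF; have [_ cdV] := wfU cdU.
apply/and5P; split.
- by rewrite in_setU abF.
- by rewrite in_setU cdU orbT.
- exact: disjointWl abV (disjointWr cdV disjFU).
- by apply: gunion_cross_edge; [apply: (subsetP abV) | apply: (subsetP cdV)]; rewrite set21.
- by apply: gunion_cross_edge; [apply: (subsetP abV) | apply: (subsetP cdV)]; rewrite set22.
Qed.

Hypothesis forestF : forest F.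

Lemma gunion_edge_cycle C : C \subset edges (gunion F U) -> edge_cycle C -> C \subset edges U.
Proof.
move=> sC cC; case/orP: (gunion_edge_cycle_split sC cC) => // sCF.
by have := forest_edge_cycle forestF sCF; rewrite cC.
Qed.

Lemma gunion_bridge a b : [set a; b] \in edges F ->
  ~ connect (adjE (edges (gunion F U) :\ [set a; b])) a b.
Proof.
move=> abF ab_conn.
have abG : [set a; b] \in edges (gunion F U) by rewrite in_setU abF.
have [C sC /andP [abC cC]] := connectD1_edge_cycle pair_edges_gunion abG ab_conn.
have [_ /subsetP abU] := wfU (subsetP (gunion_edge_cycle sC cC) _ abC).
have [_ /subsetP abV] := wfF abF.
by have := abU a (set21 a b); rewrite (disjointFr disjFU (abV a (set21 a b))).
Qed.

Lemma gunion_switch_edge_notin_cycle H D a b c d : H \subset edges (gunion F U) ->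
  a \in verts F -> c \in verts U -> d \in verts U -> ~ connect (adjE H) a b ->
  D \subset [set a; c] |: ([set b; d] |: H) -> pair_edges D -> edge_cycle D ->
  [set a; c] \notin D.
Proof.
move=> sH aF cU dU nab sD pD cD; apply/negP => acD.
have sDH : D :\ [set a; c] \subset [set b; d] |: H by rewrite subDset.
have := connect_adjES sDH (edge_cycle_connectD1 pD cD acD).
case/connect_adjE_setU1/or3P => [ac_conn | /nab // | ad_conn].
- by have := connect_gunion_notin sH aF ac_conn; rewrite cU.
- by have := connect_gunion_notin sH aF ad_conn; rewrite dU.
Qed.

Lemma switch_gunion_uniq_cycle a b c d :
  [set a; b] \in edges F -> [set c; d] \in edges U ->
  uniq_cycle (edges U) -> uniq_cycle (edges (switch (gunion F U) a b c d)).
Proof.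
move=> abF cdU uU; have [_ /subsetP abV] := wfF abF; have [_ /subsetP cdV] := wfU cdU.
have [aF bF] := (abV a (set21 a b), abV b (set22 a b)).
have [cU dU] := (cdV c (set21 c d), cdV d (set22 c d)).
apply: (uniq_cycle_sub _ (uniq_cycle_sub gunion_edge_cycle uU)).
rewrite /switch interchangeable_gunion //= => D sD cD.
set H := edges (gunion F U) :\ [set a; b] :\ [set c; d] in sD.
have sH : H \subset edges (gunion F U) by apply: subset_trans (subD1set _ _) (subD1set _ _).
have nab : ~ connect (adjE H) a b.
  by move/(connect_adjES (subD1set _ _)); apply: gunion_bridge.
have pD : pair_edges D.
  apply: pair_edgesS sD (pair_edges_switch pair_edges_gunion _ _).
    exact: disjoint_neq disjFU aF cU.
  exact: disjoint_neq disjFU bF dU.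
rewrite setUC -setUA in sD.
have acD := gunion_switch_edge_notin_cycle sH aF cU dU nab sD pD cD.
have bdD : [set b; d] \notin D.
  apply: (gunion_switch_edge_notin_cycle (b := a) sH bF dU cU _ _ pD cD).
    by rewrite connect_adjE_sym.
  by rewrite setUCA.
exact: subset_trans (subsetU1_notin (subsetU1_notin sD acD) bdD) sH.
Qed.

End DisjointUnion.

End Graphs.

Theorem lemma4p3 (T : finType) :
  (forall F : graph T, wf F -> forest F ->
     forall a b c d : T, interchangeable F a b c d -> p_switch F a b c d)
  /\
  (forall F U : graph T, wf F -> wf U -> forest F -> unicyclic U ->
     [disjoint verts F & verts U] ->
     forall a b c d : T,
       [set a; b] \in edges F -> [set c; d] \in edges (Forest U) ->
       p_switch (gunion F U) a b c d).
Proof.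
split=> [F wfF forestF a b c d Hi |
          F U wfF wfU forestF /unicyclic_uniq_cycle uU disjFU a b c d abF].
  apply/and3P; split=> //; apply: pseudoforest_uniq_cycle.
    exact: forest_uniq_cycle.
  exact: forest_switch_uniq_cycle.
rewrite in_setD => /andP [_ cdU].
apply/and3P; split; first apply: pseudoforest_uniq_cycle.
- exact: uniq_cycle_sub (gunion_edge_cycle wfF wfU disjFU forestF) uU.
- exact: interchangeable_gunion.
- exact/pseudoforest_uniq_cycle/(switch_gunion_uniq_cycle wfF wfU disjFU forestF abF cdU uU).
Qed.
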